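(* Let $T$ be a directed tree in which the longest directed path has length $1$ (i.e. every vertex is a source or a sink), and let $d$ be the degree of $T$. Then $T$ has span at most $\lfloor d/2\rfloor+1$.
   Context: A directed tree is a DAG (directed acyclic graph) whose underlying undirected graph is a tree. A source (sink) is a vertex with no incoming (outgoing) edge. The degree of a vertex is its total number of incident edges; the degree of a graph is the maximum degree of its vertices. The length of a directed path is its number of edges. An upward-planar layered drawing of a DAG $G$ maps each vertex $v$ to a point in the plane whose y-coordinate $y(v)$ is an integer, and each edge $(u,v)$ (directed from tail $u$ to head $v$) to a strictly y-monotone curve going upward from $u$ to $v$ (so $y(u)<y(v)$), such that no two edges intersect except at common endpoints. The span of an edge $(u,v)$ in such a drawing $\Gamma$ is $y(v)-y(u)$; the span of $\Gamma$ is the maximum span of its edges; the span of an upward-planar DAG is the minimum span over all its upward-planar layered drawings (no embedding prescribed). *)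

From Stdlib Require Import Reals ZArith.
From mathcomp Require Import all_boot.

Set Implicit Arguments.
Unset Strict Implicit.
Unset Printing Implicit Defensive.

Section Defs.
Variable V : finType.

(* A directed graph on V is given by its (simple) edge relation E:
   E u v means there is an edge directed from tail u to head v. *)

Definition und (E : rel V) : rel V := fun x y => E x y || E y x.

(* Directed tree: loopless, no pair of opposite edges (so the underlying
   undirected graph is simple), and the underlying undirected graph is a tree,
   i.e. nonempty, connected, with exactly |V| - 1 edges. *)
Definition directed_tree (E : rel V) : Prop :=
  [/\ (forall x, ~~ E x x),
      (forall x y, E x y -> ~~ E y x),
      (0 < #|V|)%N,
      (forall x y, connect (und E) x y)
    & #|[set p : (V * V)%type | E p.1 p.2]| = (#|V| - 1)%N].

Definition longest_path_is_one (E : rel V) : Prop :=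
  (exists u v, E u v) /\ (forall u v w, E u v -> ~ E v w).

Definition vdeg (E : rel V) (v : V) : nat := #|[set u | und E v u]|.
Definition graph_degree (E : rel V) : nat := \max_(v : V) vdeg E v.

(* An upward-planar layered drawing: vertex v is drawn at (px v, y v) with
   y v an integer; edge (u,v) is drawn as the curve
   t |-> (cx u v t, cy u v t), t in [0,1], continuous, from the point of u
   to the point of v, strictly increasing in y; distinct vertices get distinct
   points; two distinct edges meet only at the point of a common endpoint. *)
Definition upward_planar_layered_drawing (E : rel V) (y : V -> Z)
  (px : V -> R) (cx cy : V -> V -> R -> R) : Prop :=
  [/\ (forall u v, (px u, IZR (y u)) = (px v, IZR (y v)) -> u = v),
      (forall u v, E u v ->
         [/\ continuity (cx u v), continuity (cy u v),
             cx u v R0 = px u /\ cy u v R0 = IZR (y u),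
             cx u v R1 = px v /\ cy u v R1 = IZR (y v)
           & forall s t, Rle R0 s -> Rlt s t -> Rle t R1 ->
               Rlt (cy u v s) (cy u v t)])
    & (forall u v u' v' s t, E u v -> E u' v' -> (u, v) <> (u', v') ->
         Rle R0 s -> Rle s R1 -> Rle R0 t -> Rle t R1 ->
         cx u v s = cx u' v' t -> cy u v s = cy u' v' t ->
         exists w, (w = u \/ w = v) /\ (w = u' \/ w = v') /\
                   cx u v s = px w /\ cy u v s = IZR (y w))].

Definition span_at_most (E : rel V) (y : V -> Z) (k : Z) : Prop :=
  forall u v, E u v -> (y v - y u <= k)%Z.

End Defs.

From Stdlib Require Import Reals ZArith Lra Lia.
From mathcomp Require Import all_boot zify.

Set Implicit Arguments.
Unset Strict Implicit.
Unset Printing Implicit Defensive.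

(* Root the tree at a sink and let every other vertex hang from a breadth-first
   parent.  Every vertex gets an x-interval, its box, nested in the box of its
   parent and disjoint from the boxes of its siblings, and an integer level.
   The children of a sink [a] (sources) lie K = d/2 + 1 levels below [a]; the
   children of a source [a] (sinks, at most d - 1 of them) are put alternately
   in the left and right quarter of the box of [a], the k-th pair k + 1 levels
   above [a], so every edge spans at most K.  Sinks are drawn at the left end
   of their box, sources at its centre, and each edge is a two-piece polyline
   bending half a level below its head.  The drawing of the subtree of [v] stays
   in the box of [v] and below [ceiling v], so edges of disjoint subtrees never
   meet, and the bends make edges at a common vertex meet only there. *)

Local Open Scope R_scope.

Lemma INR_lt_succ_le (i n : nat) : (i < n)%N -> INR i + 1 <= INR n.
Proof. by move=> lt_in; rewrite -S_INR; apply/le_INR/leP. Qed.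

(* The slots start at [l + u], away from [l], where a sink is drawn. *)
Definition sink_slot (n : nat) (l r : R) (i : nat) : R * R :=
  let u := (r - l) / (INR n + 1) in
  (l + (INR i + 1) * u, l + (INR i + 1) * u + u / 2).

Definition source_slot (n : nat) (l r : R) (j : nat) : R * R :=
  let x := (l + r) / 2 in let s := (r - l) / 2 in let q := s / (2 * (INR n + 1)) in
  let k := INR j./2 in
  if odd j then (x - s/2 - k*q - q/2, x - s/2 - k*q)
  else (x + s/2 + k*q, x + s/2 + k*q + q/2).

(* Bend abscissa of the edge to the [j]-th source slot: it approaches the
   centre as [j./2] grows, while the slot moves away from it. *)
Definition bend_x (l r : R) (j : nat) : R :=
  let x := (l + r) / 2 in let s := (r - l) / 2 in
  x + (if odd j then -1 else 1) * (s / (4 * (INR j./2 + 1))).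

Lemma sink_slot_inside n l r i : l < r -> (i < n)%N ->
  l < (sink_slot n l r i).1 < (sink_slot n l r i).2 /\ (sink_slot n l r i).2 < r.
Proof.
move=> lt_lr lt_in; rewrite /sink_slot /=.
have le_n := INR_lt_succ_le lt_in; have i_ge0 := pos_INR i.
set u := (r - l) / (INR n + 1).
have u_gt0 : 0 < u by apply: Rdiv_lt_0_compat; lra.
have u_def : u * (INR n + 1) = r - l by rewrite /u; field; lra.
by split; [split|]; nra.
Qed.

Lemma sink_slot_disjoint n l r i i' : l < r -> (i < n)%N -> i <> i' ->
  (sink_slot n l r i).2 < (sink_slot n l r i').1 \/
  (sink_slot n l r i').2 < (sink_slot n l r i).1.
Proof.
move=> lt_lr lt_in neq_ii'; rewrite /sink_slot /=.
have := INR_lt_succ_le lt_in.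
set u := (r - l) / (INR n + 1).
have u_gt0 : 0 < u by apply: Rdiv_lt_0_compat; have := pos_INR n; lra.
by case: (ltngtP i i') => // /INR_lt_succ_le; [left | right]; nra.
Qed.

Lemma source_slot_inside n l r j : l < r -> (j < n)%N ->
  let x := (l + r) / 2 in let s := (r - l) / 2 in
  let l' := (source_slot n l r j).1 in let r' := (source_slot n l r j).2 in
  l' < r' /\
  (if odd j then x - s < l' /\ r' <= x - s/2 else x + s/2 <= l' /\ r' < x + s).
Proof.
move=> lt_lr lt_jn x s l' r'; rewrite /l' /r' /source_slot -/x -/s.
have lt_kn : (j./2 < n)%N by rewrite ltn_half_double; lia.
have := INR_lt_succ_le lt_kn; have := pos_INR j./2.
set k := INR j./2.
have s_gt0 : 0 < s by rewrite /s; lra.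
set q := s / (2 * (INR n + 1)).
have q_gt0 : 0 < q by apply: Rdiv_lt_0_compat; have := pos_INR n; lra.
have q_def : q * (2 * (INR n + 1)) = s by rewrite /q; field; have := pos_INR n; lra.
by case: (odd j) => /=; nra.
Qed.

Lemma bend_x_near_centre l r j : l < r ->
  let x := (l + r) / 2 in let s := (r - l) / 2 in
  if odd j then x - s/4 <= bend_x l r j < x else x < bend_x l r j <= x + s/4.
Proof.
move=> lt_lr x s; rewrite /bend_x -/x -/s.
have := pos_INR j./2; set k := INR j./2 => k_ge0.
have s_gt0 : 0 < s by rewrite /s; lra.
set A := s / (4 * (k + 1)).
have A_gt0 : 0 < A by apply: Rdiv_lt_0_compat; lra.
have A_def : A * (4 * (k + 1)) = s by rewrite /A; field; lra.
by case: (odd j); split; nra.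
Qed.

Lemma source_slot_monotone n l r j j' : l < r -> (j' < n)%N ->
  odd j = odd j' -> (j./2 < j'./2)%N ->
  if odd j then (source_slot n l r j').2 < (source_slot n l r j).1 /\
                bend_x l r j < bend_x l r j'
  else (source_slot n l r j).2 < (source_slot n l r j').1 /\
       bend_x l r j' < bend_x l r j.
Proof.
move=> lt_lr lt_jn odd_jj' lt_kk'; rewrite /source_slot /bend_x -odd_jj'.
have := INR_lt_succ_le lt_kk'; have := pos_INR j./2.
set k := INR j./2; set k' := INR j'./2 => k_ge0 lt_kk'R.
set x := (l + r) / 2; set s := (r - l) / 2.
have s_gt0 : 0 < s by rewrite /s; lra.
set q := s / (2 * (INR n + 1)).
have q_gt0 : 0 < q by apply: Rdiv_lt_0_compat; have := pos_INR n; lra.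
set A := s / (4 * (k + 1)); set A' := s / (4 * (k' + 1)).
have A_def : A * (4 * (k + 1)) = s by rewrite /A; field; lra.
have A'_def : A' * (4 * (k' + 1)) = s by rewrite /A'; field; lra.
have A'_gt0 : 0 < A' by apply: Rdiv_lt_0_compat; lra.
have lt_A'A : A' < A by nra.
by case: (odd j); split => /=; nra.
Qed.

Lemma source_slot_disjoint n l r j j' : l < r -> (j < n)%N -> (j' < n)%N -> j <> j' ->
  (source_slot n l r j).2 < (source_slot n l r j').1 \/
  (source_slot n l r j').2 < (source_slot n l r j).1.
Proof.
move=> lt_lr lt_jn lt_j'n neq_jj'.
case: (boolP (odd j == odd j')) => [/eqP odd_jj' | ]; last first.
  have := source_slot_inside lt_lr lt_jn; have := source_slot_inside lt_lr lt_j'n.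
  by case: (odd j); case: (odd j') => //= ? ? ?; lra.
have neq_k : j./2 <> j'./2.
  by move=> eq_k; apply: neq_jj'; rewrite -[j]odd_double_half -[j']odd_double_half odd_jj' eq_k.
case: (ltngtP j./2 j'./2) => // lt_k.
- have := source_slot_monotone lt_lr lt_j'n odd_jj' lt_k.
  by case: (odd j) => -[? _]; [right | left].
- have := source_slot_monotone lt_lr lt_jn (esym odd_jj') lt_k.
  by rewrite -odd_jj'; case: (odd j) => -[? _]; [left | right].
Qed.

(* [min1 z = min z 1] and [pos_part w = max w 0], written with [Rabs] so that
   continuity is syntactic. *)
Definition min1 (z : R) : R := (1 + z - Rabs (z - 1)) / 2.
Definition pos_part (w : R) : R := (w + Rabs w) / 2.

(* Abscissa at height [Y] of the polyline from [(xt, yt)] through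
   [(xb, yh - 1/2)] to [(xh, yh)]. *)
Definition bent_path (xt yt xb xh yh Y : R) : R :=
  xt + (xb - xt) * min1 ((Y - yt) * / (yh - 1/2 - yt))
     + (xh - xb) * pos_part (2 * (Y - (yh - 1/2))).

Section BentPath.
Variables xt yt xb xh yh : R.
Hypothesis rise : yt < yh - 1/2.

Lemma bent_path_lower Y : Y <= yh - 1/2 ->
  bent_path xt yt xb xh yh Y = xt + (xb - xt) * ((Y - yt) * / (yh - 1/2 - yt)).
Proof.
move=> le_Y; rewrite /bent_path /min1 /pos_part.
have le_z1 : (Y - yt) * / (yh - 1/2 - yt) <= 1.
  apply: (Rmult_le_reg_r (yh - 1/2 - yt)); first lra.
  by rewrite Rmult_assoc Rinv_l; lra.
rewrite (Rabs_left1 (_ - 1)); last lra.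
rewrite (Rabs_left1 (2 * _)); last lra.
by field; lra.
Qed.

Lemma bent_path_upper Y : yh - 1/2 <= Y ->
  bent_path xt yt xb xh yh Y = xh + (xb - xh) * (2 * (yh - Y)).
Proof.
move=> le_Y; rewrite /bent_path /min1 /pos_part.
have ge_z1 : 1 <= (Y - yt) * / (yh - 1/2 - yt).
  apply: (Rmult_le_reg_r (yh - 1/2 - yt)); first lra.
  by rewrite Rmult_assoc Rinv_l; lra.
rewrite (Rabs_pos_eq (_ - 1)); last lra.
rewrite (Rabs_pos_eq (2 * _)); last lra.
by field; lra.
Qed.

Lemma bent_path_lower_segment Y : yt <= Y <= yh - 1/2 ->
  exists t, 0 <= t <= 1 /\ bent_path xt yt xb xh yh Y = xt + (xb - xt) * t /\
            Y = yt + (yh - 1/2 - yt) * t.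
Proof.
move=> rng_Y; exists ((Y - yt) * / (yh - 1/2 - yt)); split; last split.
- split.
    by apply: Rmult_le_pos; [lra | apply/Rlt_le/Rinv_0_lt_compat; lra].
  apply: (Rmult_le_reg_r (yh - 1/2 - yt)); first lra.
  by rewrite Rmult_assoc Rinv_l; lra.
- by rewrite bent_path_lower //; lra.
- by field; lra.
Qed.

Lemma bent_path_upper_segment Y : yh - 1/2 <= Y <= yh ->
  exists t, 0 <= t <= 1 /\ bent_path xt yt xb xh yh Y = xh + (xb - xh) * t /\
            Y = yh - t/2.
Proof.
move=> rng_Y; exists (2 * (yh - Y)); split; last split; try lra.
by rewrite bent_path_upper //; lra.
Qed.

End BentPath.

Ltac continuity_pt_comb :=
  repeat first [ apply: continuity_pt_minus | apply: continuity_pt_opp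
               | apply: continuity_pt_plus | apply: continuity_pt_mult
               | apply: (continuity_pt_comp _ Rabs); last apply: Rcontinuity_abs
               | exact: derivable_continuous_pt (derivable_pt_id _) | by apply: continuity_pt_const ].

Lemma bent_path_continuous xt yt xb xh yh :
  continuity (fun t => bent_path xt yt xb xh yh (yt + t * (yh - yt))).
Proof. by move=> x; rewrite /bent_path /min1 /pos_part /Rdiv; continuity_pt_comb. Qed.

Lemma affine_continuous a b : continuity (fun t => a + t * b).
Proof. by move=> x; continuity_pt_comb. Qed.

Lemma segment_between a b t : 0 <= t <= 1 ->
  Rmin a b <= a + (b - a) * t <= Rmax a b.
Proof. by move=> rng_t; rewrite /Rmin /Rmax; case: (Rle_dec a b) => ?; split; nra. Qed.

Local Close Scope R_scope.

Section BreadthFirstParent.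
Variables (V : finType) (g : rel V) (root : V).
Hypothesis root_connected : forall v, connect g root v.

Definition reachable_in (v : V) (n : nat) : bool :=
  [exists p : n.-tuple V, path g root p && (last root p == v)].

Lemma reachable_in_exists v : exists n, reachable_in v n.
Proof.
have /connectP [p g_p last_p] := root_connected v.
by exists (size p); apply/existsP; exists (in_tuple p); rewrite /= g_p -last_p eqxx.
Qed.

Definition depth (v : V) : nat := ex_minn (reachable_in_exists v).

Lemma reachable_inP v n : reachable_in v n ->
  exists p, [/\ size p = n, path g root p & last root p = v].
Proof. by case/existsP => p /andP [g_p /eqP last_p]; exists p; rewrite size_tuple. Qed.

Lemma reachable_in_path p : path g root p -> reachable_in (last root p) (size p).
Proof. by move=> g_p; apply/existsP; exists (in_tuple p); rewrite /= g_p eqxx. Qed.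

Lemma depth_min v n : reachable_in v n -> depth v <= n.
Proof. by rewrite /depth; case: ex_minnP => m _; apply. Qed.

Lemma depth_reachable v : reachable_in v (depth v).
Proof. by rewrite /depth; case: ex_minnP. Qed.

Lemma depth_root : depth root = 0.
Proof. by apply/eqP; rewrite -leqn0; apply: depth_min (@reachable_in_path [::] _). Qed.

Lemma depth_eq0 v : depth v = 0 -> v = root.
Proof.
move=> d0; have := depth_reachable v; rewrite d0 => /reachable_inP [p [size_p _ <-]].
by case: p size_p.
Qed.

Lemma depth_edge u v : g u v -> depth v <= (depth u).+1.
Proof.
move=> guv; have /reachable_inP [p [<- g_p last_p]] := depth_reachable u.
have := reachable_in_path (p := rcons p v).
by rewrite rcons_path g_p last_p guv last_rcons size_rcons => /(_ erefl) /depth_min.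
Qed.

Lemma parent_exists v : v != root -> exists u, g u v && (depth u == (depth v).-1).
Proof.
move=> v_neq; have /reachable_inP [p [size_p g_p last_p]] := depth_reachable v.
case/lastP: p size_p g_p last_p => [_ _ /= v_root | q x]; first by rewrite v_root eqxx in v_neq.
rewrite size_rcons last_rcons rcons_path => size_p /andP [g_q g_x] x_v.
exists (last root q); rewrite -x_v g_x; apply/eqP.
have := depth_min (reachable_in_path g_q); have := depth_edge g_x; rewrite -x_v in size_p.
lia.
Qed.

(* [parent root = root]. *)
Definition parent (v : V) : V :=
  if [pick u | g u v && (depth u == (depth v).-1)] is Some u then u else root.

Lemma parentP v : v != root -> g (parent v) v /\ depth v = (depth (parent v)).+1.
Proof.
move=> v_neq; rewrite /parent; case: pickP => [u /andP [guv /eqP du] | none].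
  have : 0 < depth v by rewrite lt0n; apply: contra v_neq => /eqP/depth_eq0 ->.
  by split => //; lia.
by have [u] := parent_exists v_neq; rewrite none.
Qed.

Lemma parent_edge v : v != root -> g (parent v) v.
Proof. by case/parentP. Qed.

Lemma depth_parent v : v != root -> depth v = (depth (parent v)).+1.
Proof. by case/parentP. Qed.

Lemma depth_iter_parent v n : n <= depth v -> depth (iter n parent v) = depth v - n.
Proof.
elim: n => [|n IH] le_n /=; first by rewrite subn0.
have := IH (ltnW le_n); case: (eqVneq (iter n parent v) root) => [-> | neq].
  by rewrite depth_root; lia.
by rewrite (depth_parent neq); lia.
Qed.

Lemma iter_parent_neq_root v n : n < depth v -> iter n parent v != root.
Proof.
by move=> lt_n; apply/eqP => eq_r; have := depth_iter_parent (ltnW lt_n); rewrite eq_r depth_root; lia.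
Qed.

Definition sibling_rank (c : V) : nat :=
  #|[set c' | (c' != root) && (parent c' == parent c) && (enum_rank c' < enum_rank c)]|.

Definition children (a : V) : {set V} := [set c | (c != root) && (parent c == a)].

Lemma sibling_rank_mono x y : x != root -> parent x = parent y ->
  enum_rank x < enum_rank y -> sibling_rank x < sibling_rank y.
Proof.
move=> x_neq par_xy lt_xy; apply/proper_card/properP; split.
  apply/subsetP => z; rewrite !inE => /andP [/andP [-> /eqP ->] lt_zx].
  by rewrite par_xy eqxx (ltn_trans lt_zx lt_xy).
by exists x; rewrite !inE ?x_neq ?par_xy ?eqxx ?lt_xy //= ltnn.
Qed.

Lemma sibling_rank_inj c c' : c != root -> c' != root -> parent c = parent c' ->
  sibling_rank c = sibling_rank c' -> c = c'.
Proof.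
move=> c_neq c'_neq par_cc' rk_cc'.
case: (ltngtP (enum_rank c) (enum_rank c')) => [lt | lt | /val_inj/enum_rank_inj //].
- by have := sibling_rank_mono c_neq par_cc' lt; rewrite rk_cc' ltnn.
- by have := sibling_rank_mono c'_neq (esym par_cc') lt; rewrite rk_cc' ltnn.
Qed.

Lemma sibling_rank_lt c : c != root -> sibling_rank c < #|children (parent c)|.
Proof.
move=> c_neq; apply/proper_card/properP; split.
  by apply/subsetP => z; rewrite !inE => /andP [/andP [-> ->] _].
by exists c; rewrite !inE ?c_neq ?eqxx //= ltnn.
Qed.

Lemma sibling_rank_lt_card c : c != root -> sibling_rank c < #|V|.
Proof. by move=> c_neq; apply: leq_trans (sibling_rank_lt c_neq) (max_card _). Qed.

End BreadthFirstParent.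

Section SourceSinkTree.
Variables (V : finType) (E : rel V).
Hypotheses (tree_E : directed_tree E) (path1_E : longest_path_is_one E).
Variable root : V.
Hypothesis root_sink : forall u, ~~ E root u.

Let und_connected v : connect (und E) root v.
Proof. by case: tree_E => _ _ _ conn _; apply: conn. Qed.

Local Notation depth := (depth und_connected).
Local Notation parent := (parent und_connected).
Local Notation sibling_rank := (sibling_rank und_connected).
Local Notation children := (children und_connected).

Definition is_sink (v : V) : bool := [forall u, ~~ E v u].

Lemma head_is_sink u v : E u v -> is_sink v.
Proof. by move=> Euv; apply/forallP => w; apply/negP; apply: path1_E.2 Euv. Qed.

Lemma tail_not_sink u v : E u v -> ~~ is_sink u.
Proof. by move=> Euv; apply/negP => /forallP /(_ v); rewrite Euv. Qed.

Lemma source_neq_root v : ~~ is_sink v -> v != root.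
Proof. by apply: contra => /eqP ->; apply/forallP. Qed.

Lemma sink_parent_edge c : c != root -> is_sink (parent c) ->
  E c (parent c) /\ ~~ is_sink c.
Proof.
move=> c_neq sink_a; case/orP: (parent_edge und_connected c_neq) => [Eac | Eca].
  by move/forallP: sink_a => /(_ c); rewrite Eac.
by split => //; apply: tail_not_sink Eca.
Qed.

Lemma source_parent_edge c : c != root -> ~~ is_sink (parent c) ->
  E (parent c) c /\ is_sink c.
Proof.
move=> c_neq src_a; case/orP: (parent_edge und_connected c_neq) => [Eac | Eca].
  by split => //; apply: head_is_sink Eac.
by rewrite (head_is_sink Eca) in src_a.
Qed.

Lemma source_parent v : ~~ is_sink v -> is_sink (parent v) /\ E v (parent v).
Proof.
move=> src_v; case/orP: (parent_edge und_connected (source_neq_root src_v)) => [Eav | Eva].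
  by rewrite (head_is_sink Eav) in src_v.
by split => //; apply: head_is_sink Eva.
Qed.

(* Since [E] has [#|V| - 1] edges, the [#|V| - 1] parent-child pairs are all
   of them. *)
Lemma edge_parent_child u v : E u v ->
  (u != root) && (parent u == v) || (v != root) && (parent v == u).
Proof.
move=> Euv; case: tree_E => _ _ _ _ card_E.
set F := [set p : (V * V)%type | E p.1 p.2] in card_E.
pose pedge c := if E c (parent c) then (c, parent c) else (parent c, c).
have card_nonroot : #|[set~ root]| = (#|V| - 1)%N by rewrite cardsC1 subn1.
have pedge_inj : {in [set~ root] &, injective pedge}.
  move=> x y; rewrite !inE => x_neq y_neq; rewrite /pedge.
  have dx := depth_parent und_connected x_neq; have dy := depth_parent und_connected y_neq.
  case: (E x _); case: (E y _) => -[] eq1 eq2 //.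
    by rewrite eq2 in dx; rewrite -eq1 in dy; lia.
  by rewrite eq1 in dx; rewrite -eq2 in dy; lia.
have pedge_E : pedge @: [set~ root] \subset F.
  apply/subsetP => p /imsetP [z]; rewrite !inE => z_neq ->; rewrite /pedge.
  have := parent_edge und_connected z_neq; rewrite /und.
  by case: (boolP (E z (parent z))) => //= _; rewrite orbF.
have : (u, v) \in pedge @: [set~ root].
  have -> : pedge @: [set~ root] = F.
    by apply/eqP; rewrite eqEcard pedge_E card_E (card_in_imset pedge_inj) card_nonroot leqnn.
  by rewrite inE.
case/imsetP => z; rewrite !inE /pedge => z_neq.
by case: (E z _) => -[] -> ->; rewrite z_neq eqxx ?orbT.
Qed.

Lemma card_children_le a : a != root -> #|children a| <= (vdeg E a).-1.
Proof.
move=> a_neq; rewrite /vdeg [X in _ <= X.-1](cardsD1 (parent a)).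
have -> /= : parent a \in [set u | und E a u].
  by rewrite inE /und orbC; exact: (parent_edge und_connected a_neq).
apply/subset_leq_card/subsetP => z; rewrite !inE => /andP [z_neq /eqP par_z].
apply/andP; split.
  apply/eqP => eq_z; have := depth_parent und_connected a_neq.
  by have := depth_parent und_connected z_neq; rewrite par_z -eq_z; lia.
by have := parent_edge und_connected z_neq; rewrite par_z.
Qed.

(* A source has at most [d - 1] children, its parent being a sink. *)
Lemma sibling_rank_half_lt c : c != root -> ~~ is_sink (parent c) ->
  ((sibling_rank c)./2 + 1 <= (graph_degree E)./2)%N.
Proof.
move=> c_neq src_a.
have := sibling_rank_lt und_connected c_neq.
have := card_children_le (source_neq_root src_a).
have : vdeg E (parent c) <= graph_degree E by apply: leq_bigmax.
move=> ? ? ?; have : (sibling_rank c).+2 <= graph_degree E by lia.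
by move/half_leq; rewrite /= addn1.
Qed.

Local Open Scope R_scope.

Definition sink_drop : nat := ((graph_degree E)./2 + 1)%N.

Definition child_layout (box : R * R) (ya : Z) (a c : V) : (R * R) * Z :=
  if is_sink a then (sink_slot #|V| box.1 box.2 (sibling_rank c), (ya - Z.of_nat sink_drop)%Z)
  else (source_slot #|V| box.1 box.2 (sibling_rank c), (ya + 1 + Z.of_nat (sibling_rank c)./2)%Z).

Fixpoint layout (n : nat) (v : V) : (R * R) * Z :=
  match n with
  | O => ((0, 1), 0%Z)
  | S m => if v == root then ((0, 1), 0%Z)
           else child_layout (layout m (parent v)).1 (layout m (parent v)).2 (parent v) v
  end.

Definition xl (v : V) : R := (layout (depth v) v).1.1.
Definition xr (v : V) : R := (layout (depth v) v).1.2.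
Definition ylev (v : V) : Z := (layout (depth v) v).2.
Definition ylevR (v : V) : R := IZR (ylev v).
Definition xpos (v : V) : R := if is_sink v then xl v else (xl v + xr v) / 2.
Definition bend (c : V) : R := bend_x (xl (parent c)) (xr (parent c)) (sibling_rank c).
Definition half_width (a : V) : R := (xr a - xl a) / 2.

Lemma layout_child c : c != root ->
  layout (depth c) c = child_layout (layout (depth (parent c)) (parent c)).1
                         (layout (depth (parent c)) (parent c)).2 (parent c) c.
Proof. by move=> c_neq; rewrite (depth_parent und_connected c_neq) /= (negbTE c_neq). Qed.

Lemma layout_sink_parent c : c != root -> is_sink (parent c) ->
  [/\ xl c = (sink_slot #|V| (xl (parent c)) (xr (parent c)) (sibling_rank c)).1,
      xr c = (sink_slot #|V| (xl (parent c)) (xr (parent c)) (sibling_rank c)).2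
    & ylevR c = ylevR (parent c) - INR sink_drop].
Proof.
move=> c_neq sink_a.
by rewrite /xl /xr /ylevR /ylev (layout_child c_neq) /child_layout sink_a minus_IZR INR_IZR_INZ.
Qed.

Lemma layout_source_parent c : c != root -> ~~ is_sink (parent c) ->
  [/\ xl c = (source_slot #|V| (xl (parent c)) (xr (parent c)) (sibling_rank c)).1,
      xr c = (source_slot #|V| (xl (parent c)) (xr (parent c)) (sibling_rank c)).2
    & ylevR c = ylevR (parent c) + 1 + INR (sibling_rank c)./2].
Proof.
move=> c_neq src_a.
by rewrite /xl /xr /ylevR /ylev (layout_child c_neq) /child_layout (negbTE src_a) !plus_IZR INR_IZR_INZ.
Qed.

Lemma xl_lt_xr v : xl v < xr v.
Proof.
move: {-1}(depth v) (erefl (depth v)) => n; elim: n v => [|n IH] v dv.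
  by rewrite /xl /xr (depth_eq0 dv) (depth_root und_connected) /=; lra.
have v_neq : v != root by apply: contra_eq_neq dv => ->; rewrite (depth_root und_connected).
have box_a := IH (parent v) ltac:(rewrite (depth_parent und_connected v_neq) in dv; lia).
have rk_v := sibling_rank_lt_card und_connected v_neq.
case: (boolP (is_sink (parent v))) => [sink_a | src_a].
- by have [-> -> _] := layout_sink_parent v_neq sink_a; have := sink_slot_inside box_a rk_v; lra.
- by have [-> -> _] := layout_source_parent v_neq src_a; have := source_slot_inside box_a rk_v; simpl; lra.
Qed.

Lemma child_box_nested c : c != root -> xl (parent c) < xl c /\ xr c < xr (parent c).
Proof.
move=> c_neq; have box_a := xl_lt_xr (parent c).
have rk_c := sibling_rank_lt_card und_connected c_neq.
case: (boolP (is_sink (parent c))) => [sink_a | src_a].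
- by have [-> -> _] := layout_sink_parent c_neq sink_a; have := sink_slot_inside box_a rk_c; lra.
- have [-> -> _] := layout_source_parent c_neq src_a; have := source_slot_inside box_a rk_c; simpl.
  by case: (odd _) => /=; lra.
Qed.

Lemma xpos_inside v : xl v <= xpos v <= xr v.
Proof. by have := xl_lt_xr v; rewrite /xpos; case: (is_sink v); lra. Qed.

Lemma parent_xpos_outside c : c != root ->
  xpos (parent c) < xl c \/ xr c < xpos (parent c).
Proof.
move=> c_neq; have box_a := xl_lt_xr (parent c).
have rk_c := sibling_rank_lt_card und_connected c_neq.
rewrite /xpos; case: (boolP (is_sink (parent c))) => [sink_a | src_a].
- by have [-> -> _] := layout_sink_parent c_neq sink_a; have := sink_slot_inside box_a rk_c; lra.
- have [-> -> _] := layout_source_parent c_neq src_a; have := source_slot_inside box_a rk_c; simpl.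
  by case: (odd _) => /=; lra.
Qed.

Lemma sibling_boxes_disjoint c c' : c != root -> c' != root -> parent c = parent c' ->
  c <> c' -> xr c < xl c' \/ xr c' < xl c.
Proof.
move=> c_neq c'_neq par_cc' neq_cc'; have box_a := xl_lt_xr (parent c).
have rk_c := sibling_rank_lt_card und_connected c_neq.
have neq_rk : sibling_rank c <> sibling_rank c'.
  by move=> eq_rk; apply: neq_cc'; apply: sibling_rank_inj.
case: (boolP (is_sink (parent c))) => [sink_a | src_a].
- have sink_a' : is_sink (parent c') by rewrite -par_cc'.
  have [-> -> _] := layout_sink_parent c_neq sink_a.
  have [-> -> _] := layout_sink_parent c'_neq sink_a'.
  by rewrite -par_cc'; apply: sink_slot_disjoint.
- have src_a' : ~~ is_sink (parent c') by rewrite -par_cc'.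
  have [-> -> _] := layout_source_parent c_neq src_a.
  have [-> -> _] := layout_source_parent c'_neq src_a'.
  have rk_c' := sibling_rank_lt_card und_connected c'_neq.
  by rewrite -par_cc'; apply: source_slot_disjoint.
Qed.

Lemma source_child_geometry c : c != root -> ~~ is_sink (parent c) ->
  let a := parent c in let s := half_width a in
  [/\ 0 < s, xpos a = xl a + s, xpos c = xl c,
      ylevR c = ylevR a + 1 + INR (sibling_rank c)./2
    & if odd (sibling_rank c) then
        xl a < xl c /\ xr c <= xpos a - s/2 /\ xpos a - s/4 <= bend c < xpos a
      else xpos a + s/2 <= xl c /\ xr c < xr a /\ xpos a < bend c <= xpos a + s/4].
Proof.
move=> c_neq src_a /=; have box_a := xl_lt_xr (parent c).
have rk_c := sibling_rank_lt_card und_connected c_neq.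
have [_ sink_c] := source_parent_edge c_neq src_a.
have [xl_c xr_c y_c] := layout_source_parent c_neq src_a.
have := source_slot_inside box_a rk_c; have := bend_x_near_centre (sibling_rank c) box_a.
rewrite /xpos (negbTE src_a) sink_c /half_width /bend xl_c xr_c y_c /=.
by case: (odd _) => /= ? ?; split => //; try lra; repeat split; lra.
Qed.

Lemma source_children_order c c' : c != root -> c' != root -> ~~ is_sink (parent c) ->
  parent c = parent c' -> odd (sibling_rank c) = odd (sibling_rank c') ->
  ((sibling_rank c)./2 < (sibling_rank c')./2)%N ->
  if odd (sibling_rank c) then xr c' < xl c /\ bend c < bend c'
  else xr c < xl c' /\ bend c' < bend c.
Proof.
move=> c_neq c'_neq src_a par_cc' odd_cc' lt_cc'.
have src_a' : ~~ is_sink (parent c') by rewrite -par_cc'.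
have [-> -> _] := layout_source_parent c_neq src_a.
have [-> -> _] := layout_source_parent c'_neq src_a'.
have rk_c' := sibling_rank_lt_card und_connected c'_neq.
by rewrite /bend -par_cc'; apply: source_slot_monotone => //; apply: xl_lt_xr.
Qed.

Lemma ylev_sink_parent c : c != root -> is_sink (parent c) ->
  ylevR c = ylevR (parent c) - INR sink_drop.
Proof. by move=> c_neq sink_a; case: (layout_sink_parent c_neq sink_a). Qed.

Lemma ylev_source_parent c : c != root -> ~~ is_sink (parent c) ->
  ylevR c = ylevR (parent c) + 1 + INR (sibling_rank c)./2.
Proof. by move=> c_neq src_a; case: (layout_source_parent c_neq src_a). Qed.

Lemma rank_half_le_drop c : c != root -> ~~ is_sink (parent c) ->
  1 + INR (sibling_rank c)./2 <= INR sink_drop - 1.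
Proof.
move=> c_neq src_a; have := sibling_rank_half_lt c_neq src_a.
move/leP/le_INR; rewrite /sink_drop !plus_INR /=; lra.
Qed.

Lemma ylev_source_grandparent c : c != root -> ~~ is_sink (parent c) ->
  ylevR c <= ylevR (parent (parent c)) - 1.
Proof.
move=> c_neq src_a; have [sink_aa _] := source_parent src_a.
rewrite (ylev_source_parent c_neq src_a) (ylev_sink_parent (source_neq_root src_a) sink_aa).
by have := rank_half_le_drop c_neq src_a; lra.
Qed.

(* The subtree of [v] is drawn below [ceiling v]. *)
Definition ceiling (v : V) : R := if is_sink v then ylevR v else ylevR (parent v) - 1.

Lemma ceiling_parent c : c != root -> ceiling c <= ceiling (parent c).
Proof.
move=> c_neq; rewrite /ceiling; case: (boolP (is_sink (parent c))) => [sink_a | src_a].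
- by have [_ src_c] := sink_parent_edge c_neq sink_a; rewrite (negbTE src_c); lra.
- by have [_ ->] := source_parent_edge c_neq src_a; apply: ylev_source_grandparent.
Qed.

Lemma ancestor_nested v n : (n <= depth v)%N ->
  [/\ xl (iter n parent v) <= xl v, xr v <= xr (iter n parent v)
    & ceiling v <= ceiling (iter n parent v)].
Proof.
elim: n => [|n IH] le_n /=; first by split; lra.
have [? ? ?] := IH (ltnW le_n); have a_neq := iter_parent_neq_root le_n.
by have [? ?] := child_box_nested a_neq; have := ceiling_parent a_neq; split; lra.
Qed.

Lemma same_depth_disjoint a b : depth a = depth b -> a <> b ->
  xr a < xl b \/ xr b < xl a.
Proof.
move: {-1}(depth a) (erefl (depth a)) => n; elim: n a b => [|n IH] a b da db neq_ab.
  by rewrite (depth_eq0 da) (depth_eq0 (esym db)) in neq_ab.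
have a_neq : a != root by apply: contra_eq_neq da => ->; rewrite (depth_root und_connected).
have b_neq : b != root by apply: contra_eq_neq db => ->; rewrite (depth_root und_connected).
case: (eqVneq (parent a) (parent b)) => [par_ab | /eqP neq_par].
  exact: sibling_boxes_disjoint.
have dpa := depth_parent und_connected a_neq; have dpb := depth_parent und_connected b_neq.
have := IH (parent a) (parent b) ltac:(lia) ltac:(lia) neq_par.
by have := child_box_nested a_neq; have := child_box_nested b_neq;
   have := xl_lt_xr a; have := xl_lt_xr b; lra.
Qed.

Lemma descendant_or_disjoint u v : (depth u <= depth v)%N ->
  iter (depth v - depth u) parent v = u \/ xr u < xl v \/ xr v < xl u.
Proof.
move=> le_uv; have le_n : (depth v - depth u <= depth v)%N by lia.
have [? ? _] := ancestor_nested le_n.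
case: (eqVneq (iter (depth v - depth u) parent v) u) => [-> | /eqP neq]; first by left.
have := same_depth_disjoint (b := u) _ neq.
rewrite depth_iter_parent // => /(_ ltac:(lia)).
by have := xl_lt_xr v; have := xl_lt_xr u; right; lra.
Qed.

Lemma xpos_inj : injective xpos.
Proof.
suff le_inj u v : (depth u <= depth v)%N -> xpos u = xpos v -> u = v.
  move=> u v eq_x; case: (leqP (depth u) (depth v)) => [le_uv | /ltnW le_vu].
    exact: le_inj.
  exact/esym/le_inj.
move=> le_uv eq_x; have := xpos_inside u; have := xpos_inside v.
case: (descendant_or_disjoint le_uv); last lra.
have le_n : (depth v - depth u <= depth v)%N by lia.
move: le_n; case: (depth v - depth u)%N => [// | m] le_m /= anc.
have b_neq := iter_parent_neq_root le_m; have [? ? _] := ancestor_nested (ltnW le_m).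
by have := parent_xpos_outside b_neq; rewrite anc; lra.
Qed.

(* For [c != root], [c] indexes the edge between [c] and its parent. *)
Definition edge_tail (c : V) : V := if is_sink (parent c) then c else parent c.
Definition edge_head (c : V) : V := if is_sink (parent c) then parent c else c.
Definition edge_bend (c : V) : R := if is_sink (parent c) then xpos c else bend c.
Definition edge_x (c : V) (Y : R) : R :=
  bent_path (xpos (edge_tail c)) (ylevR (edge_tail c)) (edge_bend c)
            (xpos (edge_head c)) (ylevR (edge_head c)) Y.
Definition on_edge (c : V) (X Y : R) : Prop :=
  ylevR (edge_tail c) <= Y <= ylevR (edge_head c) /\ X = edge_x c Y.

Lemma edge_rise c : c != root -> ylevR (edge_tail c) < ylevR (edge_head c) - 1/2.
Proof.
move=> c_neq; rewrite /edge_tail /edge_head.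
have : 1 <= INR sink_drop by rewrite /sink_drop plus_INR /=; have := pos_INR (graph_degree E)./2; lra.
case: (boolP (is_sink (parent c))) => [sink_a | src_a].
- by rewrite (ylev_sink_parent c_neq sink_a); lra.
- by rewrite (ylev_source_parent c_neq src_a); have := pos_INR (sibling_rank c)./2; lra.
Qed.

Lemma on_edge_sink_parent c X Y : c != root -> is_sink (parent c) -> on_edge c X Y ->
  (ylevR c <= Y <= ylevR (parent c) - 1/2 /\ X = xpos c) \/
  (exists t, 0 <= t <= 1 /\ X = xpos (parent c) + (xpos c - xpos (parent c)) * t /\
             Y = ylevR (parent c) - t/2).
Proof.
move=> c_neq sink_a [rng_Y ->]; have := edge_rise c_neq.
rewrite /edge_x /edge_tail /edge_head /edge_bend sink_a in rng_Y * => rise.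
case: (Rle_lt_dec Y (ylevR (parent c) - 1/2)) => Y_lo.
- left; have [t [_ [-> _]]] := bent_path_lower_segment (xpos c) (xpos c) (xpos (parent c)) rise (conj rng_Y.1 Y_lo).
  by split; [lra | ring].
- right; have [t [rng_t [-> ->]]] := bent_path_upper_segment (xpos c) (xpos c) (xpos (parent c)) rise (conj (Rlt_le _ _ Y_lo) rng_Y.2).
  by exists t.
Qed.

Lemma on_edge_source_parent c X Y : c != root -> ~~ is_sink (parent c) -> on_edge c X Y ->
  (exists t, 0 <= t <= 1 /\ X = xpos (parent c) + (bend c - xpos (parent c)) * t /\
             Y = ylevR (parent c) + (ylevR c - 1/2 - ylevR (parent c)) * t) \/
  (exists t, 0 <= t <= 1 /\ X = xpos c + (bend c - xpos c) * t /\ Y = ylevR c - t/2).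
Proof.
move=> c_neq src_a [rng_Y ->]; have := edge_rise c_neq.
rewrite /edge_x /edge_tail /edge_head /edge_bend (negbTE src_a) in rng_Y * => rise.
case: (Rle_lt_dec Y (ylevR c - 1/2)) => Y_lo.
- by left; apply: bent_path_lower_segment rise _ _; lra.
- by right; apply: bent_path_upper_segment rise _ _; lra.
Qed.

Lemma on_edge_in_parent_box c X Y : c != root -> on_edge c X Y ->
  xl (parent c) <= X <= xr (parent c) /\ Y <= ceiling (parent c).
Proof.
move=> c_neq on_c; have [? ?] := child_box_nested c_neq.
have := xpos_inside (parent c); have := xpos_inside c; have := xl_lt_xr c.
case: (boolP (is_sink (parent c))) => [sink_a | src_a]; rewrite /ceiling.
- rewrite sink_a; case: (on_edge_sink_parent c_neq sink_a on_c) => [[rng_Y ->] | [t [rng_t [-> ->]]]].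
    by lra.
  by have := segment_between (xpos (parent c)) (xpos c) rng_t; rewrite /Rmin /Rmax;
     case: Rle_dec; lra.
- rewrite (negbTE src_a).
  have [s_gt0 xpos_a xpos_c y_c bend_c] := source_child_geometry c_neq src_a.
  have := ylev_source_grandparent c_neq src_a; have := edge_rise c_neq.
  rewrite /edge_tail /edge_head (negbTE src_a) /half_width in s_gt0 xpos_a bend_c * => rise.
  case: (on_edge_source_parent c_neq src_a on_c) => [] [t [rng_t [-> ->]]].
  + have := segment_between (xpos (parent c)) (bend c) rng_t.
    by move: bend_c; rewrite /Rmin /Rmax; case: (odd _); case: Rle_dec; nra.
  + have := segment_between (xpos c) (bend c) rng_t.
    by move: bend_c; rewrite /Rmin /Rmax; case: (odd _); case: Rle_dec; lra.
Qed.

Lemma on_edge_in_child_box c X Y : c != root -> ~~ is_sink (parent c) -> on_edge c X Y ->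
  xl c <= X <= xr c ->
  exists t, 0 <= t <= 1 /\ X = xpos c + (bend c - xpos c) * t /\ Y = ylevR c - t/2.
Proof.
move=> c_neq src_a on_c X_in.
have [s_gt0 xpos_a xpos_c _ bend_c] := source_child_geometry c_neq src_a.
case: (on_edge_source_parent c_neq src_a on_c) => // [[t [rng_t [eq_X _]]]].
have := segment_between (xpos (parent c)) (bend c) rng_t; rewrite -eq_X.
by move: bend_c; rewrite /Rmin /Rmax; case: (odd _); case: Rle_dec; lra.
Qed.

Lemma bend_outside_child c : c != root -> ~~ is_sink (parent c) ->
  bend c < xl c \/ xr c < bend c.
Proof. by move=> c_neq src_a; have := source_child_geometry c_neq src_a; case: (odd _) => -[] /=; lra. Qed.

Lemma on_edge_at_parent_x c X Y : c != root -> ~~ is_sink (parent c) -> on_edge c X Y ->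
  X = xpos (parent c) -> Y = ylevR (parent c).
Proof.
move=> c_neq src_a on_c eq_X.
have [s_gt0 xpos_a xpos_c _ bend_c] := source_child_geometry c_neq src_a.
case: (on_edge_source_parent c_neq src_a on_c) => [] [t [rng_t [eq_Xt eq_Yt]]].
- have t0 : (bend c - xpos (parent c)) * t = 0 by lra.
  have bend_neq : bend c - xpos (parent c) <> 0 by move: bend_c; case: (odd _); lra.
  by case: (Rmult_integral _ _ t0) => // t_eq0; rewrite eq_Yt t_eq0; ring.
- have := segment_between (xpos c) (bend c) rng_t; rewrite -eq_Xt.
  by have := xl_lt_xr c; move: bend_c; rewrite /Rmin /Rmax; case: (odd _); case: Rle_dec; lra.
Qed.

Lemma on_edge_side c X Y : c != root -> ~~ is_sink (parent c) -> on_edge c X Y ->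
  if odd (sibling_rank c) then X <= xpos (parent c) else xpos (parent c) <= X.
Proof.
move=> c_neq src_a on_c.
have [s_gt0 xpos_a xpos_c _ bend_c] := source_child_geometry c_neq src_a.
case: (on_edge_source_parent c_neq src_a on_c) => [] [t [rng_t [-> _]]].
- have := segment_between (xpos (parent c)) (bend c) rng_t.
  by move: bend_c; rewrite /Rmin /Rmax; case: (odd _); case: Rle_dec; lra.
- have := segment_between (xpos c) (bend c) rng_t.
  by have := xl_lt_xr c; move: bend_c; rewrite /Rmin /Rmax; case: (odd _); case: Rle_dec; lra.
Qed.

Lemma sibling_ranks_half_neq c c' : c != root -> c' != root -> parent c = parent c' ->
  c <> c' -> odd (sibling_rank c) = odd (sibling_rank c') ->
  (sibling_rank c)./2 <> (sibling_rank c')./2.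
Proof.
move=> c_neq c'_neq par_cc' neq_cc' odd_cc' half_cc'; apply/neq_cc'/sibling_rank_inj => //.
by rewrite -[sibling_rank c]odd_double_half -[sibling_rank c']odd_double_half odd_cc' half_cc'.
Qed.

Lemma on_edge_above_sibling c c' X Y : c != root -> c' != root -> parent c = parent c' ->
  c <> c' -> on_edge c X Y -> xl c' <= X <= xr c' -> ceiling c' < Y.
Proof.
move=> c_neq c'_neq par_cc' neq_cc' on_c X_in.
have := sibling_boxes_disjoint c_neq c'_neq par_cc' neq_cc'.
case: (boolP (is_sink (parent c))) => [sink_a | src_a] disj.
- have sink_a' : is_sink (parent c') by rewrite -par_cc'.
  have [_ src_c'] := sink_parent_edge c'_neq sink_a'.
  rewrite /ceiling (negbTE src_c') -par_cc'.
  case: (on_edge_sink_parent c_neq sink_a on_c) => [[_ eq_X] | [t [rng_t [_ ->]]]]; last lra.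
  by have := xpos_inside c; lra.
have src_a' : ~~ is_sink (parent c') by rewrite -par_cc'.
have [_ sink_c'] := source_parent_edge c'_neq src_a'; rewrite /ceiling sink_c'.
have [s_gt0 xpos_a xpos_c y_c bend_c] := source_child_geometry c_neq src_a.
have [_ _ xpos_c' y_c' bend_c'] := source_child_geometry c'_neq src_a'.
rewrite -par_cc' in xpos_c' y_c' bend_c'.
case: (on_edge_source_parent c_neq src_a on_c) => [] [t [rng_t [eq_X eq_Y]]].
  have := segment_between (xpos (parent c)) (bend c) rng_t; rewrite -eq_X.
  by move: bend_c bend_c'; rewrite /Rmin /Rmax; case: (odd (sibling_rank c));
     case: (odd (sibling_rank c')); case: Rle_dec; lra.
have := segment_between (xpos c) (bend c) rng_t; rewrite -eq_X /Rmin /Rmax.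
have := xl_lt_xr c; have := xl_lt_xr c'.
case: (boolP (odd (sibling_rank c) == odd (sibling_rank c'))) => [/eqP odd_cc' | odd_neq]; last first.
  by move: odd_neq bend_c bend_c'; case: (odd (sibling_rank c)); case: (odd (sibling_rank c'));
     case: Rle_dec => //=; lra.
case: (ltngtP (sibling_rank c)./2 (sibling_rank c')./2) => [lt_k | /INR_lt_succ_le | ?].
- have := source_children_order c_neq c'_neq src_a par_cc' odd_cc' lt_k.
  rewrite -odd_cc' in bend_c'.
  by move: bend_c bend_c'; case: (odd _); case: Rle_dec; lra.
- by lra.
- by exfalso; apply: sibling_ranks_half_neq c_neq c'_neq par_cc' neq_cc' odd_cc' _.
Qed.

(* Two edges from a source [a] to children on the same side of [xpos a]: the
   lower pieces are straight segments from [xpos a] of different slopes. *)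
Lemma same_side_siblings_meet c c' X Y : c != root -> c' != root -> parent c = parent c' ->
  ~~ is_sink (parent c) -> odd (sibling_rank c) = odd (sibling_rank c') ->
  ((sibling_rank c)./2 < (sibling_rank c')./2)%N ->
  on_edge c X Y -> on_edge c' X Y -> X = xpos (parent c) /\ Y = ylevR (parent c).
Proof.
move=> c_neq c'_neq par_cc' src_a odd_cc' lt_k on_c on_c'.
have src_a' : ~~ is_sink (parent c') by rewrite -par_cc'.
have [s_gt0 xpos_a xpos_c y_c bend_c] := source_child_geometry c_neq src_a.
have [_ _ xpos_c' y_c' bend_c'] := source_child_geometry c'_neq src_a'.
rewrite -par_cc' -odd_cc' in xpos_c' y_c' bend_c'.
have order := source_children_order c_neq c'_neq src_a par_cc' odd_cc' lt_k.
have lt_kR := INR_lt_succ_le lt_k; have k_ge0 := pos_INR (sibling_rank c)./2.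
have Y_le : Y <= ylevR c by case: on_c; rewrite /edge_head (negbTE src_a); lra.
case: (on_edge_source_parent c'_neq src_a' on_c') => [] [t' [rng_t' [eq_X' eq_Y']]]; last first.
  by move: bend_c bend_c'; case: (odd _); lra.
rewrite -par_cc' in eq_X' eq_Y'.
case: (on_edge_source_parent c_neq src_a on_c) => [] [t [rng_t [eq_X eq_Y]]]; last first.
  have := segment_between (xpos c) (bend c) rng_t; rewrite -eq_X.
  have := segment_between (xpos (parent c)) (bend c') rng_t'; rewrite -eq_X'.
  have := xl_lt_xr c.
  by move: bend_c bend_c' order; rewrite /Rmin /Rmax; case: (odd _) => ? ? ?;
     do 2 case: Rle_dec; lra.
set A := bend c - xpos (parent c) in eq_X; set A' := bend c' - xpos (parent c) in eq_X'.
set D := ylevR c - 1/2 - ylevR (parent c) in eq_Y.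
set D' := ylevR c' - 1/2 - ylevR (parent c) in eq_Y'.
have At : A * t = A' * t' by lra.
have Dt : D * t = D' * t' by lra.
have det0 : (A * D' - A' * D) * t = 0.
  have -> : (A * D' - A' * D) * t = D' * (A * t) - A' * (D * t) by ring.
  by rewrite At Dt; ring.
have det_neq : A * D' - A' * D <> 0.
  by rewrite /A /A' /D /D'; move: bend_c bend_c' order; case: (odd _) => ? ? ?; nra.
case: (Rmult_integral _ _ det0) => // t0.
by rewrite t0 in eq_X eq_Y; split; lra.
Qed.

Lemma sink_siblings_meet c c' X Y : c != root -> c' != root -> parent c = parent c' ->
  c <> c' -> is_sink (parent c) ->
  on_edge c X Y -> on_edge c' X Y -> X = xpos (parent c) /\ Y = ylevR (parent c).
Proof.
move=> c_neq c'_neq par_cc' neq_cc' sink_a on_c on_c'.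
have sink_a' : is_sink (parent c') by rewrite -par_cc'.
have := sibling_boxes_disjoint c_neq c'_neq par_cc' neq_cc'.
have := xpos_inside c; have := xpos_inside c'.
case: (on_edge_sink_parent c_neq sink_a on_c) => [[Y_c X_c] | [t [rng_t [X_c Y_c]]]];
case: (on_edge_sink_parent c'_neq sink_a' on_c') => [[Y_c' X_c'] | [t' [rng_t' [X_c' Y_c']]]];
rewrite -par_cc' in Y_c' X_c' => ? ? ?; try by exfalso; lra.
- have t'1 : t' = 1 by lra.
  by exfalso; rewrite t'1 in X_c'; lra.
- have t1 : t = 1 by lra.
  by exfalso; rewrite t1 in X_c; lra.
- have eq_t : t' = t by lra.
  rewrite eq_t in X_c'; have : (xpos c - xpos c') * t = 0 by lra.
  by case/Rmult_integral => [| t0]; [lra | rewrite t0 in X_c Y_c; split; lra].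
Qed.

Lemma siblings_meet_at_parent c c' X Y : c != root -> c' != root -> parent c = parent c' ->
  c <> c' -> on_edge c X Y -> on_edge c' X Y -> X = xpos (parent c) /\ Y = ylevR (parent c).
Proof.
move=> c_neq c'_neq par_cc' neq_cc' on_c on_c'.
case: (boolP (is_sink (parent c))) => [sink_a | src_a].
  exact: sink_siblings_meet c_neq c'_neq par_cc' neq_cc' sink_a on_c on_c'.
have src_a' : ~~ is_sink (parent c') by rewrite -par_cc'.
case: (boolP (odd (sibling_rank c) == odd (sibling_rank c'))) => [/eqP odd_cc' | odd_neq].
  case: (ltngtP (sibling_rank c)./2 (sibling_rank c')./2) => [lt_k | lt_k | eq_k].
  - exact: same_side_siblings_meet c_neq c'_neq par_cc' src_a odd_cc' lt_k on_c on_c'.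
  - rewrite par_cc'.
    exact: same_side_siblings_meet c'_neq c_neq (esym par_cc') src_a' (esym odd_cc') lt_k on_c' on_c.
  - by case: (sibling_ranks_half_neq c_neq c'_neq par_cc' neq_cc' odd_cc').
have X_a : X = xpos (parent c).
  move: odd_neq (on_edge_side c_neq src_a on_c) (on_edge_side c'_neq src_a' on_c').
  by rewrite -par_cc'; case: (odd _); case: (odd _) => //= _; lra.
by split => //; apply: on_edge_at_parent_x on_c X_a.
Qed.

Lemma child_edge_meets c c2 X Y : c != root -> c2 != root -> parent c2 = c ->
  on_edge c X Y -> on_edge c2 X Y -> X = xpos c /\ Y = ylevR c.
Proof.
move=> c_neq c2_neq par_c2 on_c on_c2.
have [X_in Y_le] := on_edge_in_parent_box c2_neq on_c2; rewrite par_c2 in X_in Y_le.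
case: (boolP (is_sink (parent c))) => [sink_a | src_a].
- have [_ src_c] := sink_parent_edge c_neq sink_a.
  move: Y_le; rewrite /ceiling (negbTE src_c) => Y_le.
  case: (on_edge_sink_parent c_neq sink_a on_c) => [[_ X_c] | [t [rng_t [_ Y_t]]]]; last lra.
  have src_c2 : ~~ is_sink (parent c2) by rewrite par_c2.
  split => //; rewrite -par_c2; apply: on_edge_at_parent_x c2_neq src_c2 on_c2 _.
  by rewrite par_c2.
have [_ sink_c] := source_parent_edge c_neq src_a.
have [t [rng_t [X_t Y_t]]] := on_edge_in_child_box c_neq src_a on_c X_in.
have sink_c2 : is_sink (parent c2) by rewrite par_c2.
have := bend_outside_child c_neq src_a.
have := xpos_inside c2; have [] := child_box_nested c2_neq; rewrite par_c2.
case: (on_edge_sink_parent c2_neq sink_c2 on_c2) => [[Y_c2 X_c2] | [t2 [rng_t2 [X_c2 Y_c2]]]];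
  rewrite par_c2 in Y_c2 X_c2 * => ? ? ? ?.
- have t1 : t = 1 by lra.
  by exfalso; rewrite t1 in X_t; lra.
- have eq_t : t2 = t by lra.
  rewrite eq_t in X_c2; have : (bend c - xpos c2) * t = 0 by lra.
  by case/Rmult_integral => [| t0]; [lra | rewrite t0 in X_t Y_t; split; lra].
Qed.

Lemma edge_misses_grandchild_box c b X Y : c != root -> b != root -> parent b = c ->
  on_edge c X Y -> xl b <= X <= xr b -> Y <= ceiling b -> False.
Proof.
move=> c_neq b_neq par_b on_c X_in Y_le.
have := ceiling_parent b_neq; rewrite par_b /ceiling => ceil_b.
case: (boolP (is_sink (parent c))) => [sink_a | src_a].
- have [_ src_c] := sink_parent_edge c_neq sink_a; rewrite (negbTE src_c) in ceil_b.
  case: (on_edge_sink_parent c_neq sink_a on_c) => [[_ X_c] | [t [rng_t [_ Y_t]]]].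
    by have := parent_xpos_outside b_neq; rewrite par_b; lra.
  by move: Y_le; rewrite /ceiling; lra.
have [_ sink_c] := source_parent_edge c_neq src_a.
have src_b : ~~ is_sink b by have [] := sink_parent_edge b_neq; rewrite par_b.
have [] := child_box_nested b_neq; rewrite par_b => ? ?.
have [t [rng_t [_ Y_t]]] := on_edge_in_child_box c_neq src_a on_c ltac:(lra).
by move: Y_le; rewrite /ceiling (negbTE src_b) par_b; lra.
Qed.

(* Unless [c] and [c2] are siblings or [c] is the parent of [c2], the boxes of
   their parents are disjoint, or the edge of [c2] lies in the box and below
   the ceiling of a sibling or of a child of [c], which the edge of [c] avoids. *)
Lemma edges_meet_at_vertex c c2 X Y : c != root -> c2 != root -> c <> c2 ->
  (depth (parent c) <= depth (parent c2))%N -> on_edge c X Y -> on_edge c2 X Y ->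
  exists w, (w = c \/ w = parent c) /\ (w = c2 \/ w = parent c2) /\
            X = xpos w /\ Y = ylevR w.
Proof.
move=> c_neq c2_neq neq_cc2 le_d on_c on_c2.
have [X_in Y_le] := on_edge_in_parent_box c_neq on_c.
have [X_in2 Y_le2] := on_edge_in_parent_box c2_neq on_c2.
have le_n : (depth (parent c2) - depth (parent c) <= depth (parent c2))%N by lia.
have [anc | disj] := descendant_or_disjoint le_d; last by exfalso; lra.
move: (depth (parent c2) - depth (parent c))%N le_n anc => [_ /= par_eq | m le_m anc].
  have [-> ->] := siblings_meet_at_parent c_neq c2_neq (esym par_eq) neq_cc2 on_c on_c2.
  by exists (parent c); rewrite par_eq; split; [right | split; [right | ]].
have b_neq := iter_parent_neq_root le_m.
have [xl_b xr_b ceil_b] := ancestor_nested (ltnW le_m).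
rewrite /= in anc; case: (eqVneq (iter m parent (parent c2)) c) => [b_c | /eqP b_neq_c].
  move: m le_m b_c {b_neq anc xl_b xr_b ceil_b} => [_ /= par_c2 | m le_m /= par_b].
    have [-> ->] := child_edge_meets c_neq c2_neq par_c2 on_c on_c2.
    by exists c; rewrite par_c2; split; [left | split; [right | ]].
  have b'_neq := iter_parent_neq_root (ltnW le_m).
  have [? ? ?] := ancestor_nested (ltnW (ltnW le_m)).
  by exfalso; apply: edge_misses_grandchild_box c_neq b'_neq par_b on_c _ _; lra.
have := on_edge_above_sibling c_neq b_neq (esym anc) (nesym b_neq_c) on_c ltac:(lra).
by lra.
Qed.

Definition edge_child (u v : V) : V := if (u != root) && (parent u == v) then u else v.

Lemma edge_childP u v : E u v ->
  let c := edge_child u v in [/\ c != root, edge_tail c = u & edge_head c = v].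
Proof.
move=> Euv /=; rewrite /edge_child.
case: (boolP ((u != root) && (parent u == v))) => [/andP [u_neq /eqP par_u] | not_par_u].
  have sink_a : is_sink (parent u) by rewrite par_u; apply: head_is_sink Euv.
  by rewrite /edge_tail /edge_head sink_a par_u.
have := edge_parent_child Euv; rewrite (negbTE not_par_u) /= => /andP [v_neq /eqP par_v].
have src_a : ~~ is_sink (parent v) by rewrite par_v; apply: tail_not_sink Euv.
by rewrite /edge_tail /edge_head (negbTE src_a) par_v.
Qed.

Lemma edge_endpoints c w : w = c \/ w = parent c -> w = edge_tail c \/ w = edge_head c.
Proof. by rewrite /edge_tail /edge_head; case: (is_sink _); tauto. Qed.

Lemma edge_span u v : E u v -> ylevR v - ylevR u <= INR sink_drop.
Proof.
case/edge_childP; set c := edge_child u v => c_neq <- <-; rewrite /edge_tail /edge_head.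
case: (boolP (is_sink (parent c))) => [sink_a | src_a].
- by rewrite (ylev_sink_parent c_neq sink_a); lra.
- by rewrite (ylev_source_parent c_neq src_a); have := rank_half_le_drop c_neq src_a; lra.
Qed.

Definition edge_cy (u v : V) (t : R) : R := ylevR u + t * (ylevR v - ylevR u).
Definition edge_cx (u v : V) (t : R) : R := edge_x (edge_child u v) (edge_cy u v t).

Lemma layout_upward_planar : upward_planar_layered_drawing E ylev xpos edge_cx edge_cy.
Proof.
split.
- by move=> u v [eq_x _]; apply: xpos_inj.
- move=> u v Euv; have [c_neq tail_c head_c] := edge_childP Euv.
  have := edge_rise c_neq; rewrite /edge_cx /edge_cy /edge_x tail_c head_c => rise.
  split; [exact: bent_path_continuous | exact: affine_continuous | | | ].
  + by rewrite Rmult_0_l Rplus_0_r bent_path_lower; [split; [ring | ] | lra | lra].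
  + rewrite Rmult_1_l Rplus_minus bent_path_upper; [split; [ring | ] | lra | lra].
    by rewrite /ylevR.
  + by move=> s t s_ge0 lt_st t_le1; nra.
move=> u v u' v' s t Euv Eu'v' neq_uv s_ge0 s_le1 t_ge0 t_le1 eq_x eq_y.
have [c_neq tail_c head_c] := edge_childP Euv.
have [c'_neq tail_c' head_c'] := edge_childP Eu'v'.
set c := edge_child u v in c_neq tail_c head_c; set c' := edge_child u' v' in c'_neq tail_c' head_c'.
have neq_cc' : c <> c' by move=> eq_cc'; apply: neq_uv; rewrite -tail_c -head_c eq_cc' tail_c' head_c'.
have := edge_rise c_neq; have := edge_rise c'_neq.
rewrite tail_c head_c tail_c' head_c' => rise' rise.
have on_c : on_edge c (edge_cx u v s) (edge_cy u v s).
  by rewrite /on_edge tail_c head_c /edge_cy; split => //; nra.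
have on_c' : on_edge c' (edge_cx u v s) (edge_cy u v s).
  by rewrite eq_x eq_y /on_edge tail_c' head_c' /edge_cy; split => //; nra.
have [w [w_c [w_c' [-> ->]]]] : exists w, (w = c \/ w = parent c) /\
    (w = c' \/ w = parent c') /\ edge_cx u v s = xpos w /\ edge_cy u v s = ylevR w.
  case: (leqP (depth (parent c)) (depth (parent c'))) => le_d.
    exact: edges_meet_at_vertex c_neq c'_neq neq_cc' le_d on_c on_c'.
  have [w [? [? ?]]] := edges_meet_at_vertex c'_neq c_neq (nesym neq_cc') (ltnW le_d) on_c' on_c.
  by exists w.
exists w; rewrite -tail_c -head_c -tail_c' -head_c'.
by split; [apply: edge_endpoints | split; [apply: edge_endpoints | ]].
Qed.

Lemma layout_span : span_at_most E ylev (Z.of_nat sink_drop).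
Proof. by move=> u v /edge_span; rewrite /ylevR INR_IZR_INZ -minus_IZR => /le_IZR. Qed.

End SourceSinkTree.

Theorem mainTheorem8 (V : finType) (E : rel V) :
  directed_tree E -> longest_path_is_one E ->
  exists (y : V -> Z) (px : V -> R) (cx cy : V -> V -> R -> R),
    upward_planar_layered_drawing E y px cx cy /\
    span_at_most E y (Z.of_nat ((graph_degree E)./2 + 1)).
Proof.
move=> tree_E path1_E; have [[u [r Eur]] no_path2] := path1_E.
have r_sink w : ~~ E r w by apply/negP; apply: no_path2 Eur.
exists (ylev tree_E r), (xpos tree_E r), (edge_cx tree_E r), (edge_cy tree_E r).
split; [exact (layout_upward_planar tree_E path1_E r_sink) | exact (layout_span path1_E r_sink)].
Qed.
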